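(* With notation as in the context (type $E_6$ over $\mathbb{Z}/3$), let $s\in\{1,3,4,5,6\}$ and let $x\ne y$ be elements of $\Gamma_s^+$. Then $(x|y)=0$ if and only if $x$ and $y$ agree in exactly one of their five coordinates.
   Context: Let $V=(\mathbb{Z}/3)^5$ with the standard symmetric form $\sum_i x_iy_i$. Let $\Delta$ be the root system of type $E_6$ with simple roots $\alpha_1,\dots,\alpha_6$, $\langle\alpha_i,\alpha_i\rangle=2$, $\langle\alpha_i,\alpha_j\rangle=-1$ if $\{i,j\}\in\{\{1,3\},\{3,4\},\{4,5\},\{5,6\},\{2,4\}\}$, $0$ otherwise; $\Lambda=\bigoplus\mathbb{Z}\alpha_i$, $\Delta^+$ the positive roots. Let $f:\Lambda\to V$ be the group homomorphism with $f(\alpha_1)=(1,2,0,0,0)$, $f(\alpha_2)=(0,0,0,1,2)$, $f(\alpha_3)=(0,1,2,0,0)$, $f(\alpha_4)=(0,0,1,2,0)$, $f(\alpha_5)=(0,0,0,1,1)$, $f(\alpha_6)=(1,1,1,1,1)$. For $\beta=\sum\beta^i\alpha_i\in\Delta^+$ let $m(\beta)=\max\{i:\beta^i\ne0\}$; set $\Delta_1^+=\{\alpha_1\}$, $\Delta_3^+=\{\beta: m(\beta)\in\{2,3\}\}$, $\Delta_s^+=\{\beta: m(\beta)=s\}$ for $s=4,5,6$, and $\Gamma_s^+=f(\Delta_s^+)$. *)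

From mathcomp Require Import all_boot all_order all_algebra.
Set Implicit Arguments. Unset Strict Implicit. Unset Printing Implicit Defensive.
Import GRing.Theory Num.Theory.
Local Open Scope ring_scope.

(* Simple roots alpha_1..alpha_6 are indexed by 'I_6 as 0..5 (alpha_{i+1} ~ i).
   Coordinates of V = (Z/3)^5 are indexed by 'I_5. *)

Definition e6_edge (i j : nat) : bool :=
  [|| (i, j) == (0, 2)%N, (i, j) == (2, 3)%N, (i, j) == (3, 4)%N,
      (i, j) == (4, 5)%N | (i, j) == (1, 3)%N].

Definition e6_gram (i j : 'I_6) : int :=
  if i == j then 2 else if e6_edge i j || e6_edge j i then -1 else 0.

(* An element of Lambda, given by its coefficients beta^i (positive roots
   have nonnegative coefficients, so nat coefficients suffice). *)
Definition e6_form (b c : 'I_6 -> nat) : int :=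
  \sum_(i < 6) \sum_(j < 6) (b i)%:Z * (c j)%:Z * e6_gram i j.

(* Positive roots of E6: the nonzero elements of Lambda with nonnegative
   coefficients and norm 2 (root system of the simply-laced lattice). *)
Definition is_pos_root (b : 'I_6 -> nat) : bool :=
  [exists i, b i != 0%N] && (e6_form b b == 2).

(* m(beta) = max{ i : beta^i <> 0 }, with 1-based labels. *)
Definition mroot (b : 'I_6 -> nat) : nat := \max_(i < 6 | b i != 0%N) i.+1.

Definition in_Delta (s : nat) (b : 'I_6 -> nat) : bool :=
  is_pos_root b &&
  (if s == 1%N then [forall i, b i == (i == 0 :> nat)]
   else if s == 3%N then (mroot b == 2%N) || (mroot b == 3%N)
   else mroot b == s).

(* Images of the simple roots under f, as natural representatives. *)
Definition f_simple (i : 'I_6) (k : 'I_5) : nat :=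
  nth 0%N (nth [::] [:: [:: 1; 2; 0; 0; 0];
                        [:: 0; 0; 0; 1; 2];
                        [:: 0; 1; 2; 0; 0];
                        [:: 0; 0; 1; 2; 0];
                        [:: 0; 0; 0; 1; 1];
                        [:: 1; 1; 1; 1; 1]]%N i) k.

Definition V := {ffun 'I_5 -> 'Z_3}.

Definition fmap (b : 'I_6 -> nat) : V :=
  [ffun k => \sum_(i < 6) ((f_simple i k)%:R : 'Z_3) *+ b i].

Definition vform (x y : V) : 'Z_3 := \sum_(k < 5) x k * y k.

Definition nagree (x y : V) : nat := #|[set k | x k == y k]|.

(* A positive root b of E6 has norm 2.  If w is (three times) the fundamental
   weight dual to the coefficient b_i, then 0 <= |6b - w|^2 = 72 - 36 b_i + |w|^2
   with |w|^2 <= 54, so every coefficient of a positive root is at most 3.  The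
   positive roots are therefore found among the 4^6 vectors with coefficients
   below 4, and the statement becomes a finite check over pairs of roots in each
   Delta_s, decided by evaluation. *)

From Stdlib Require Import FunctionalExtensionality.
From mathcomp Require Import all_boot all_order all_algebra zify ring.
Set Implicit Arguments.
Unset Strict Implicit.
Unset Printing Implicit Defensive.
Import Num.Theory.
Local Open Scope ring_scope.

Definition e6_sqnorm (x0 x1 x2 x3 x4 x5 : int) : int :=
  2 * (x0 ^+ 2 + x1 ^+ 2 + x2 ^+ 2 + x3 ^+ 2 + x4 ^+ 2 + x5 ^+ 2)
  - 2 * (x0 * x2 + x2 * x3 + x3 * x4 + x4 * x5 + x1 * x3).

Lemma e6_sqnorm_ge0 x0 x1 x2 x3 x4 x5 : 0 <= e6_sqnorm x0 x1 x2 x3 x4 x5.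
Proof.
have sos : 6 * e6_sqnorm x0 x1 x2 x3 x4 x5 =
    3 * (2 * x0 - x2) ^+ 2 + 3 * (2 * x5 - x4) ^+ 2 + 3 * (2 * x1 - x3) ^+ 2
    + (3 * x2 - 2 * x3) ^+ 2 + (3 * x4 - 2 * x3) ^+ 2 + x3 ^+ 2.
  by rewrite /e6_sqnorm; ring.
have : 0 <= 6 * e6_sqnorm x0 x1 x2 x3 x4 x5.
  by rewrite sos !addr_ge0 ?sqr_ge0 // mulr_ge0 ?sqr_ge0.
by rewrite pmulr_rge0.
Qed.

Lemma e6_sqnorm_eq2_le3 x0 x1 x2 x3 x4 x5 : e6_sqnorm x0 x1 x2 x3 x4 x5 = 2 ->
  all (fun x => x <= 3) [:: x0; x1; x2; x3; x4; x5].
Proof.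
move=> norm2.
have le3 x w0 w1 w2 w3 w4 w5 c :
    e6_sqnorm (6 * x0 - w0) (6 * x1 - w1) (6 * x2 - w2)
              (6 * x3 - w3) (6 * x4 - w4) (6 * x5 - w5)
      = 36 * e6_sqnorm x0 x1 x2 x3 x4 x5 - 36 * x + c ->
    c <= 54 -> x <= 3.
  move=> shiftE c_le54.
  have := e6_sqnorm_ge0 (6 * x0 - w0) (6 * x1 - w1) (6 * x2 - w2)
                        (6 * x3 - w3) (6 * x4 - w4) (6 * x5 - w5).
  by rewrite shiftE norm2; lia.
rewrite /= andbT; do 5 ?[apply/andP; split].
- by apply: (le3 _ 4 3 5 6 4 2 12) => //; rewrite /e6_sqnorm; ring.
- by apply: (le3 _ 3 6 6 9 6 3 18) => //; rewrite /e6_sqnorm; ring.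
- by apply: (le3 _ 5 6 10 12 8 4 30) => //; rewrite /e6_sqnorm; ring.
- by apply: (le3 _ 6 9 12 18 12 6 54) => //; rewrite /e6_sqnorm; ring.
- by apply: (le3 _ 4 6 8 12 10 5 30) => //; rewrite /e6_sqnorm; ring.
- by apply: (le3 _ 2 3 4 6 5 4 12) => //; rewrite /e6_sqnorm; ring.
Qed.

(* [ord_enum] is built with [insub], which evaluation cannot unfold (it is
   stuck on the opaque [idP]); [insub_eq] computes. *)
Lemma enum_ordE n : Finite.enum 'I_n = pmap (@insub_eq _ _ 'I_n) (iota 0 n).
Proof. by rewrite unlock (eq_pmap (@insub_eqE _ _ 'I_n)). Qed.

Ltac decide_by_evaluation :=
  rewrite /FiniteQuant.quant0b /pred0b ?bigop.unlock ?card.unlock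
          /index_enum /enum_mem !enum_ordE;
  vm_compute; reflexivity.

Definition vec_of_seq (t : seq nat) : 'I_6 -> nat := nth 0%N t.

Lemma e6_form_seqE (x0 x1 x2 x3 x4 x5 : nat) :
  e6_form (vec_of_seq [:: x0; x1; x2; x3; x4; x5])
          (vec_of_seq [:: x0; x1; x2; x3; x4; x5])
  = e6_sqnorm x0 x1 x2 x3 x4 x5.
Proof.
rewrite /e6_form bigop.unlock /index_enum enum_ordE /= /e6_gram /=.
by rewrite /e6_sqnorm; ring.
Qed.

Fixpoint bounded_seqs (m n : nat) : seq (seq nat) :=
  if n is n'.+1 then [seq x :: t | x <- iota 0 m, t <- bounded_seqs m n']
  else [:: [::]].

Lemma mem_bounded_seqs m n t :
  size t = n -> all (fun x => x < m)%N t -> t \in bounded_seqs m n.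
Proof.
elim: n t => [|n IH] [|x t] //= [size_t] /andP[x_lt all_t].
by apply/allpairsP; exists (x, t); rewrite mem_iota IH.
Qed.

Definition e6_pos_roots : seq (seq nat) :=
 [:: [:: 0; 0; 0; 0; 0; 1]; [:: 0; 0; 0; 0; 1; 0];
  [:: 0; 0; 0; 0; 1; 1]; [:: 0; 0; 0; 1; 0; 0];
  [:: 0; 0; 0; 1; 1; 0]; [:: 0; 0; 0; 1; 1; 1];
  [:: 0; 0; 1; 0; 0; 0]; [:: 0; 0; 1; 1; 0; 0];
  [:: 0; 0; 1; 1; 1; 0]; [:: 0; 0; 1; 1; 1; 1];
  [:: 0; 1; 0; 0; 0; 0]; [:: 0; 1; 0; 1; 0; 0];
  [:: 0; 1; 0; 1; 1; 0]; [:: 0; 1; 0; 1; 1; 1];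
  [:: 0; 1; 1; 1; 0; 0]; [:: 0; 1; 1; 1; 1; 0];
  [:: 0; 1; 1; 1; 1; 1]; [:: 0; 1; 1; 2; 1; 0];
  [:: 0; 1; 1; 2; 1; 1]; [:: 0; 1; 1; 2; 2; 1];
  [:: 1; 0; 0; 0; 0; 0]; [:: 1; 0; 1; 0; 0; 0];
  [:: 1; 0; 1; 1; 0; 0]; [:: 1; 0; 1; 1; 1; 0];
  [:: 1; 0; 1; 1; 1; 1]; [:: 1; 1; 1; 1; 0; 0];
  [:: 1; 1; 1; 1; 1; 0]; [:: 1; 1; 1; 1; 1; 1];
  [:: 1; 1; 1; 2; 1; 0]; [:: 1; 1; 1; 2; 1; 1];
  [:: 1; 1; 1; 2; 2; 1]; [:: 1; 1; 2; 2; 1; 0];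
  [:: 1; 1; 2; 2; 1; 1]; [:: 1; 1; 2; 2; 2; 1];
  [:: 1; 1; 2; 3; 2; 1]; [:: 1; 2; 2; 3; 2; 1]]%N.

Lemma e6_pos_rootsE :
  [seq t <- bounded_seqs 4 6 | is_pos_root (vec_of_seq t)] = e6_pos_roots.
Proof. rewrite /is_pos_root /e6_form; decide_by_evaluation. Qed.

Lemma is_pos_root_vec_of_seq b :
  is_pos_root b -> exists2 t, t \in e6_pos_roots & b = vec_of_seq t.
Proof.
move=> root_b; set t := [seq b i | i <- enum 'I_6].
have bE : b = vec_of_seq t.
  apply: functional_extensionality => i.
  by rewrite /vec_of_seq (nth_map i) ?size_enum_ord // nth_ord_enum.
exists t => //; rewrite -e6_pos_rootsE mem_filter -bE root_b.
apply: mem_bounded_seqs; first by rewrite size_map size_enum_ord.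
have norm2 : e6_form (vec_of_seq t) (vec_of_seq t) = 2.
  by rewrite -bE; case/andP: root_b => _ /eqP.
have : all (fun x : int => x <= 3) [seq x%:Z | x <- t].
  by move: norm2; rewrite /t enumT enum_ordE /= e6_form_seqE; apply: e6_sqnorm_eq2_le3.
by rewrite all_map; apply: sub_all => x /=; lia.
Qed.

Definition Delta_roots (s : nat) : seq (seq nat) :=
  [seq t <- e6_pos_roots | in_Delta s (vec_of_seq t)].

Lemma in_Delta_vec_of_seq s b :
  in_Delta s b -> exists2 t, t \in Delta_roots s & b = vec_of_seq t.
Proof.
move=> Db; have /andP[root_b _] := Db.
have [t t_root bE] := is_pos_root_vec_of_seq root_b.
by exists t; rewrite // mem_filter -bE Db.
Qed.

Definition fmap_coord (b : 'I_6 -> nat) (k : 'I_5) : 'Z_3 :=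
  \sum_(i < 6) (f_simple i k)%:R *+ b i.

Definition orthogonal_iff_agree_once (x y : 'I_5 -> 'Z_3) : bool :=
  [exists k, x k != y k] ==>
  ((\sum_k x k * y k == 0) == (#|[pred k | x k == y k]| == 1%N)).

Lemma orthogonal_iff_agree_onceP (x y : 'I_5 -> 'Z_3) :
  orthogonal_iff_agree_once x y -> [ffun k => x k] != [ffun k => y k] ->
  vform [ffun k => x k] [ffun k => y k] = 0 <->
  nagree [ffun k => x k] [ffun k => y k] = 1%N.
Proof.
move=> /implyP xy_ok x_neq_y.
have /eqP orthE : (\sum_k x k * y k == 0) == (#|[pred k | x k == y k]| == 1%N).
  apply: xy_ok; apply: contraNT x_neq_y => /existsPn x_eq_y.
  by apply/eqP/ffunP => k; rewrite !ffunE; apply/eqP/negPn.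
have -> : vform [ffun k => x k] [ffun k => y k] = \sum_k x k * y k.
  by apply: eq_bigr => k _; rewrite !ffunE.
have -> : nagree [ffun k => x k] [ffun k => y k] = #|[pred k | x k == y k]|.
  by apply: eq_card => k; rewrite inE !ffunE.
by split=> /eqP; [rewrite orthE | rewrite -orthE] => /eqP.
Qed.

Lemma Delta_orthogonal_iff_agree_once :
  all (fun s => all (fun t => all (fun u =>
        orthogonal_iff_agree_once (fmap_coord (vec_of_seq t))
                                  (fmap_coord (vec_of_seq u)))
      (Delta_roots s)) (Delta_roots s)) [:: 1; 3; 4; 5; 6]%N.
Proof.
rewrite /Delta_roots /in_Delta /mroot /is_pos_root /e6_form
        /orthogonal_iff_agree_once /fmap_coord.
decide_by_evaluation.
Qed.

Theorem mainTheorem16 (s : nat) (b c : 'I_6 -> nat) :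
  s \in [:: 1; 3; 4; 5; 6]%N ->
  in_Delta s b -> in_Delta s c ->
  fmap b != fmap c ->
  (vform (fmap b) (fmap c) = 0) <-> (nagree (fmap b) (fmap c) = 1%N).
Proof.
move=> s_in /in_Delta_vec_of_seq[t t_in ->] /in_Delta_vec_of_seq[u u_in ->].
apply: orthogonal_iff_agree_onceP.
by move: Delta_orthogonal_iff_agree_once
  => /allP/(_ s s_in)/allP/(_ t t_in)/allP/(_ u u_in).
Qed.
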